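(* Let $R$ be an associative (unital) ring and let $\sigma\colon R\to R$ be an additive surjection with $\sigma(1)=1$. If $R$ is right Noetherian, then the non-associative skew power series ring $R[[X;\sigma]]$ is right Noetherian.
   Context: A right ideal of a non-associative ring $S$ is an additive subgroup $I$ with $Is\subseteq I$ for all $s\in S$; $S$ is right Noetherian if it satisfies the ascending chain condition on right ideals. $R[[X;\sigma]]$ is the set of formal power series $\sum_{i=0}^\infty r_iX^i$ with $r_i\in R$, with pointwise addition and multiplication $\left(\sum_m a_mX^m\right)\left(\sum_n b_nX^n\right)=\sum_{k}\left(\sum_{m+n=k}a_m\sigma^m(b_n)\right)X^k$, i.e. the extension of $(rX^m)(sX^n)=(r\sigma^m(s))X^{m+n}$ for $r,s\in R$, $m,n\in\mathbb{N}$; it is a unital, not necessarily associative ring. *)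

From mathcomp Require Import all_boot all_algebra.
Set Implicit Arguments. Unset Strict Implicit. Unset Printing Implicit Defensive.
Import GRing.Theory.
Local Open Scope ring_scope.

Record ringsig (T : Type) := RingSig {
  rs_zero : T; rs_add : T -> T -> T; rs_opp : T -> T; rs_mul : T -> T -> T }.

Definition right_ideal (T : Type) (S : ringsig T) (I : T -> Prop) : Prop :=
  [/\ I (rs_zero S),
      (forall x y, I x -> I y -> I (rs_add S x y)),
      (forall x, I x -> I (rs_opp S x)) &
      (forall x s, I x -> I (rs_mul S x s))].

Definition right_noetherian (T : Type) (S : ringsig T) : Prop :=
  forall I : nat -> T -> Prop,
    (forall n, right_ideal S (I n)) ->
    (forall n x, I n x -> I n.+1 x) ->
    exists N, forall n, (N <= n)%N -> forall x, I n x <-> I N x.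

Definition ring_sig (R : pzRingType) : ringsig R :=
  RingSig 0 (@GRing.add R) (@GRing.opp R) (@GRing.mul R).

Definition pseries (R : Type) := nat -> R.

(* Multiplication of R[[X;sigma]]:
   (sum a_m X^m)(sum b_n X^n) = sum_k (sum_{m+n=k} a_m sigma^m(b_n)) X^k. *)
Definition skew_mul (R : pzRingType) (sigma : R -> R) (a b : pseries R) : pseries R :=
  fun k => \sum_(m < k.+1) a m * iter m sigma (b (k - m)%N).

Definition skew_pseries_sig (R : pzRingType) (sigma : R -> R) : ringsig (pseries R) :=
  RingSig (fun _ => 0) (fun a b k => a k + b k) (fun a k => - a k)
          (@skew_mul R sigma).

From mathcomp Require Import all_boot all_algebra.
From mathcomp Require Import zify.
From Stdlib Require Import Classical ClassicalEpsilon FunctionalExtensionality.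
Set Implicit Arguments.
Unset Strict Implicit.
Unset Printing Implicit Defensive.
Import GRing.Theory.
Local Open Scope ring_scope.

(** For a right ideal [I] of [R[[X;sigma]]] and [n : nat], the X^n-coefficients
   of the elements of [I] of order at least [n] form a right ideal [L_n(I)] of
   [R]: surjectivity of [sigma^n] is what makes it closed under right
   multiplication, and multiplying by [X] (using [sigma 1 = 1]) shows that
   [L_n(I) <= L_(n+1)(I)].  Given an ascending chain [I_k], the doubly indexed
   family [L_n(I_k)] stabilises uniformly in [n] from some [N] on.  Then for
   [k >= N] every element [g] of [I_k] lies in [I_N]: its first coefficients are
   cancelled one at a time by elements of [I_N], and from a degree [m] on
   finitely many [f_j] in [I_N] whose X^m-coefficients generate the union of the
   [L_n(I_N)] allow to write [g = sum_j f_j h_j], the series [h_j] being built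
   coefficient by coefficient.  Right multiplication by [h] is additive in [h]
   and its X^k-coefficient only depends on [h] up to degree [k], so no
   associativity is needed. *)

Lemma ascending_le (P : nat -> Prop) :
  (forall n, P n -> P n.+1) -> forall n n', (n <= n')%N -> P n -> P n'.
Proof.
move=> PS n n' le_nn' Pn; rewrite -(subnK le_nn').
by elim: (n' - n)%N => [|d IH]; rewrite ?add0n // addSn; apply: PS.
Qed.

Section RightIdeals.
Variables (T : Type) (S : ringsig T) (I : T -> Prop).
Hypothesis I_ideal : right_ideal S I.

Lemma right_ideal0 : I (rs_zero S).
Proof. by case: I_ideal. Qed.

Lemma right_idealD x y : I x -> I y -> I (rs_add S x y).
Proof. by case: I_ideal => _ + _ _; apply. Qed.

Lemma right_idealN x : I x -> I (rs_opp S x).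
Proof. by case: I_ideal => _ _ + _; apply. Qed.

Lemma right_idealM x s : I x -> I (rs_mul S x s).
Proof. by case: I_ideal => _ _ _; apply. Qed.

End RightIdeals.

Section DoubleChain.
Variables (T : Type) (S : ringsig T) (A : nat -> nat -> T -> Prop).
Hypothesis noeth : right_noetherian S.
Hypothesis A_ideal : forall n k, right_ideal S (A n k).
Hypothesis A_incr_row : forall n k x, A n k x -> A n.+1 k x.
Hypothesis A_incr_col : forall n k x, A n k x -> A n k.+1 x.

Lemma double_chain_le n n' k k' x :
  (n <= n')%N -> (k <= k')%N -> A n k x -> A n' k' x.
Proof.
move=> le_n le_k Ax.
have Ax_row := @ascending_le (fun i => A i k x) (fun i => @A_incr_row i k x) n n' le_n Ax.
exact: (@ascending_le (fun j => A n' j x) (fun j => @A_incr_col n' j x) k k' le_k).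
Qed.

Lemma double_chain_stable_rows M : exists N, forall n, (n < M)%N ->
  forall k, (N <= k)%N -> forall x, A n k x -> A n N x.
Proof.
elim: M => [|M [N1 stable1]]; first by exists 0%N.
have [N2 stable2] := noeth (A_ideal M) (@A_incr_col M).
exists (maxn N1 N2) => n; rewrite ltnS leq_eqVlt => /orP[/eqP-> | lt_nM] k le_Nk x Ax.
- apply: (double_chain_le (leqnn M) (leq_maxr N1 N2)).
  by apply/(stable2 k); [exact: leq_trans (leq_maxr N1 N2) le_Nk|].
- apply: (double_chain_le (leqnn n) (leq_maxl N1 N2)).
  by apply: (stable1 n lt_nM k) => //; exact: leq_trans (leq_maxl N1 N2) le_Nk.
Qed.

Lemma right_noetherian_double_chain :
  exists N, forall k, (N <= k)%N -> forall n x, A n k x -> A n N x.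
Proof.
have [m diag_stable] := noeth (I := fun k => A k k) (fun k => A_ideal k k)
  (fun k x => double_chain_le (leqnSn k) (leqnSn k)).
have [N rows_stable] := double_chain_stable_rows m.
exists (maxn m N) => k le_k n x Ax.
have [lt_nm | le_mn] := ltnP n m.
  apply: (double_chain_le (leqnn n) (leq_maxr m N)).
  by apply: (rows_stable n lt_nm k) => //; exact: leq_trans (leq_maxr m N) le_k.
have le_m_nk : (m <= maxn n k)%N by exact: leq_trans le_mn (leq_maxl n k).
apply: (double_chain_le le_mn (leq_maxl m N)); apply/(diag_stable _ le_m_nk).
exact: double_chain_le (leq_maxl n k) (leq_maxr n k) Ax.
Qed.

End DoubleChain.

Section FinitelyGenerated.
Variable R : pzRingType.
Implicit Types (l : seq R) (A : R -> Prop).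

Definition rspan l (x : R) := exists t : nat -> R, x = \sum_(j < size l) l`_j * t j.

Lemma rspan_right_ideal l : right_ideal (ring_sig R) (rspan l).
Proof.
split=> /=.
- by exists (fun _ => 0); rewrite big1 // => j _; rewrite mulr0.
- move=> _ _ [t1 ->] [t2 ->]; exists (fun j => t1 j + t2 j).
  by rewrite -big_split; apply: eq_bigr => j _; rewrite mulrDr.
- move=> _ [t ->]; exists (fun j => - t j).
  by rewrite -sumrN; apply: eq_bigr => j _; rewrite mulrN.
- move=> _ s [t ->]; exists (fun j => t j * s).
  by rewrite mulr_suml; apply: eq_bigr => j _; rewrite mulrA.
Qed.

Lemma rspan_cons y l x : rspan l x -> rspan (y :: l) x.
Proof.
move=> [t ->]; exists (fun j => if j is j'.+1 then t j' else 0).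
by rewrite /= big_ord_recl /= mulr0 add0r.
Qed.

Lemma rspan_head y l : rspan (y :: l) y.
Proof.
exists (fun j => if j is 0%N then 1 else 0).
by rewrite /= big_ord_recl /= mulr1 big1 ?addr0 // => j _; rewrite mulr0.
Qed.

Lemma right_noetherian_finitely_generated A :
  right_noetherian (ring_sig R) -> right_ideal (ring_sig R) A ->
  exists l, (forall j, (j < size l)%N -> A l`_j) /\ forall x, A x -> rspan l x.
Proof.
move=> noeth A_ideal; apply: NNPP => not_fg.
have grow l : (forall j, (j < size l)%N -> A l`_j) -> exists y, A y /\ ~ rspan l y.
  move=> l_A; apply: NNPP => all_span; apply: not_fg; exists l; split=> // x Ax.
  by apply: NNPP => not_span; apply: all_span; exists x.
pose next l := epsilon (inhabits 0) (fun y => A y /\ ~ rspan l y) :: l.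
pose C k := iter k next [::].
have C_A k j : (j < size (C k))%N -> A (C k)`_j.
  elim: k j => [|k IH] [|j] //= lt_j; last exact: IH.
  by case: (epsilon_spec (inhabits 0) _ (grow _ IH)).
have [N stable] := noeth _ (fun k => rspan_right_ideal (C k))
  (fun k x Ckx => rspan_cons _ Ckx).
have [_] := epsilon_spec (inhabits 0) _ (grow _ (C_A N)); apply.
exact/(stable N.+1 (leqnSn N))/rspan_head.
Qed.

End FinitelyGenerated.

Section SkewPowerSeries.
Variables (R : pzRingType) (sigma : R -> R).
Hypothesis sigma_add : forall x y : R, sigma (x + y) = sigma x + sigma y.
Hypothesis sigma_surj : forall y : R, exists x : R, sigma x = y.
Hypothesis sigma1 : sigma 1 = 1.

Local Notation S := (skew_pseries_sig sigma).
Local Notation "f ** h" := (skew_mul sigma f h) (at level 40, left associativity).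

Lemma iter_sigmaD n x y : iter n sigma (x + y) = iter n sigma x + iter n sigma y.
Proof. by elim: n => //= n ->; rewrite sigma_add. Qed.

Lemma iter_sigma0 n : iter n sigma 0 = 0.
Proof.
have sigma0 : sigma 0 = 0 by apply: (addrI (sigma 0)); rewrite -sigma_add !addr0.
by elim: n => //= n ->.
Qed.

Lemma iter_sigma1 n : iter n sigma 1 = 1.
Proof. by elim: n => //= n ->. Qed.

Lemma iter_sigma_surj n y : exists x, iter n sigma x = y.
Proof.
elim: n y => [|n IH] y; first by exists y.
by have [z <-] := sigma_surj y; have [x <-] := IH z; exists x.
Qed.

Definition vanishes_below (f : pseries R) n := forall i, (i < n)%N -> f i = 0.

Definition monomial d (c : R) : pseries R := fun i => if i == d then c else 0.

Lemma skew_mul_monomial f d c k :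
  (f ** monomial d c) k = if (d <= k)%N then f (k - d)%N * iter (k - d) sigma c else 0.
Proof.
rewrite /skew_mul /monomial; case: leqP => [le_dk | lt_kd].
- have lt_kd_k : (k - d < k.+1)%N by rewrite ltnS leq_subr.
  rewrite (bigD1 (Ordinal lt_kd_k)) //= subKn // eqxx big1 ?addr0 // => i ne_i.
  have -> : ((k - i)%N == d) = false.
    apply/negbTE/eqP => eq_d; move/eqP: ne_i; apply; apply: val_inj => /=.
    have := ltn_ord i; lia.
  by rewrite iter_sigma0 mulr0.
- rewrite big1 // => i _.
  have -> : ((k - i)%N == d) = false.
    by apply/negbTE; rewrite neq_ltn (leq_ltn_trans (leq_subr _ _) lt_kd).
  by rewrite iter_sigma0 mulr0.
Qed.

Lemma skew_mulDr f h h' k : (f ** (fun i => h i + h' i)) k = (f ** h) k + (f ** h') k.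
Proof.
by rewrite /skew_mul -big_split; apply: eq_bigr => i _; rewrite iter_sigmaD mulrDr.
Qed.

Lemma skew_mulr0 f k : (f ** (fun _ => 0)) k = 0.
Proof. by apply: big1 => i _; rewrite iter_sigma0 mulr0. Qed.

Lemma eq_skew_mulr f h h' k :
  (forall i, (i <= k)%N -> h i = h' i) -> (f ** h) k = (f ** h') k.
Proof. by move=> eq_h; apply: eq_bigr => i _; rewrite eq_h // leq_subr. Qed.

Lemma right_ideal_sum_mul I p (fs hs : nat -> pseries R) :
  right_ideal S I -> (forall j, (j < p)%N -> I (fs j)) ->
  I (fun k => \sum_(j < p) (fs j ** hs j) k).
Proof.
move=> I_ideal; elim: p => [|p IH] fs_I.
  have -> : (fun k => \sum_(j < 0) (fs j ** hs j) k) = fun _ => 0.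
    by apply: functional_extensionality => k; rewrite big_ord0.
  exact: right_ideal0 I_ideal.
have -> : (fun k => \sum_(j < p.+1) (fs j ** hs j) k)
        = rs_add S (fun k => \sum_(j < p) (fs j ** hs j) k) (fs p ** hs p).
  by apply: functional_extensionality => k; rewrite big_ord_recr.
apply: (right_idealD I_ideal); first by apply: IH => j /ltnW; apply: fs_I.
exact: (right_idealM I_ideal) (fs_I p (ltnSn p)).
Qed.

Definition lead_ideal n (I : pseries R -> Prop) (x : R) :=
  exists f, [/\ I f, vanishes_below f n & f n = x].

Lemma lead_ideal_right_ideal n I :
  right_ideal S I -> right_ideal (ring_sig R) (lead_ideal n I).
Proof.
move=> I_ideal; split=> /=.
- by exists (fun _ => 0); split=> //; exact: right_ideal0 I_ideal.
- move=> _ _ [f [If f_low <-]] [h [Ih h_low <-]].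
  exists (fun k => f k + h k); split=> //; first exact: (right_idealD I_ideal).
  by move=> i lt_in; rewrite f_low // h_low // addr0.
- move=> _ [f [If f_low <-]]; exists (fun k => - f k); split=> //.
    exact: (right_idealN I_ideal).
  by move=> i lt_in; rewrite f_low // oppr0.
- move=> _ s [f [If f_low <-]]; have [c <-] := iter_sigma_surj n s.
  exists (f ** monomial 0 c); split; first exact: (right_idealM I_ideal).
  + by move=> i lt_in; rewrite skew_mul_monomial leq0n subn0 f_low ?mul0r.
  + by rewrite skew_mul_monomial leq0n subn0.
Qed.

Lemma lead_idealS I n x :
  right_ideal S I -> lead_ideal n I x -> lead_ideal n.+1 I x.
Proof.
move=> I_ideal [f [If f_low <-]].
exists (f ** monomial 1 1); split; first exact: (right_idealM I_ideal).
- move=> i lt_in; rewrite skew_mul_monomial; case: ifP => // le_1i.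
  by rewrite f_low ?mul0r //; lia.
- by rewrite skew_mul_monomial ltn0Sn subn1 /= iter_sigma1 mulr1.
Qed.

Lemma lead_ideal_le I n n' x :
  right_ideal S I -> (n <= n')%N -> lead_ideal n I x -> lead_ideal n' I x.
Proof.
by move=> I_ideal; apply: (@ascending_le (fun k => lead_ideal k I x)) => k; apply: lead_idealS.
Qed.

Lemma lead_ideal_sub I J n x :
  (forall f, I f -> J f) -> lead_ideal n I x -> lead_ideal n J x.
Proof. by move=> subIJ [f [If f_low f_n]]; exists f; split=> //; apply: subIJ. Qed.

Definition lead_union I (x : R) := exists n, lead_ideal n I x.

Lemma lead_union_right_ideal I :
  right_ideal S I -> right_ideal (ring_sig R) (lead_union I).
Proof.
move=> I_ideal; have L_ideal n := lead_ideal_right_ideal n I_ideal.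
split=> /=.
- by exists 0%N; exact: right_ideal0 (L_ideal 0%N).
- move=> x y [n Lx] [n' Ly]; exists (maxn n n'); apply: (right_idealD (L_ideal _)).
  + exact: lead_ideal_le I_ideal (leq_maxl n n') Lx.
  + exact: lead_ideal_le I_ideal (leq_maxr n n') Ly.
- by move=> x [n Lx]; exists n; exact: (right_idealN (L_ideal n)).
- by move=> x s [n Lx]; exists n; exact: (right_idealM (L_ideal n)).
Qed.

Lemma lead_union_bounded I p (a : nat -> R) : right_ideal S I ->
  (forall j, (j < p)%N -> lead_union I (a j)) ->
  exists m, forall j, (j < p)%N -> lead_ideal m I (a j).
Proof.
move=> I_ideal; elim: p => [|p IH] a_lead; first by exists 0%N.
have [m a_m] := IH (fun j lt_jp => a_lead j (ltnW lt_jp)).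
have [n a_n] := a_lead p (ltnSn p).
exists (maxn m n) => j; rewrite ltnS leq_eqVlt => /orP[/eqP-> | lt_jp].
- exact: lead_ideal_le I_ideal (leq_maxr m n) a_n.
- exact: lead_ideal_le I_ideal (leq_maxl m n) (a_m j lt_jp).
Qed.

Lemma approx_below I J g m :
  right_ideal S I -> right_ideal S J -> (forall f, I f -> J f) ->
  (forall n x, lead_ideal n J x -> lead_ideal n I x) -> J g ->
  exists2 f, I f & vanishes_below (fun i => g i - f i) m.
Proof.
move=> I_ideal J_ideal subIJ lead_sub Jg.
elim: m => [|n [f If low]]; first by exists (fun _ => 0); first exact: right_ideal0 I_ideal.
have Jgf : J (fun i => g i - f i).
  exact: (right_idealD J_ideal) Jg (right_idealN J_ideal (subIJ _ If)).
have /lead_sub[f' [If' f'_low f'_n]] : lead_ideal n J (g n - f n).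
  by exists (fun i => g i - f i).
exists (fun i => f i + f' i); first exact: (right_idealD I_ideal).
move=> i; rewrite ltnS leq_eqVlt => /orP[/eqP-> | lt_in].
  by rewrite opprD addrA f'_n subrr.
by rewrite opprD addrA low // f'_low // subr0.
Qed.

Section Approximation.
Variables (I J : pseries R -> Prop) (p m : nat) (fs : nat -> pseries R) (g : pseries R).
Hypotheses (I_ideal : right_ideal S I) (J_ideal : right_ideal S J).
Hypothesis subIJ : forall f, I f -> J f.
Hypothesis fs_I : forall j, (j < p)%N -> I (fs j).
Hypothesis fs_low : forall j, (j < p)%N -> vanishes_below (fs j) m.
Hypothesis lead_J_span : forall n x, lead_ideal n J x ->
  exists t : nat -> R, x = \sum_(j < p) fs j m * t j.
Hypotheses (Jg : J g) (g_low : vanishes_below g m).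

Definition residue (hs : nat -> pseries R) : pseries R :=
  fun k => g k - \sum_(j < p) (fs j ** hs j) k.

Lemma residue_J hs : J (residue hs).
Proof.
apply: (right_idealD J_ideal Jg); apply: (right_idealN J_ideal).
exact: right_ideal_sum_mul J_ideal (fun j lt_jp => subIJ (fs_I lt_jp)).
Qed.

Definition add_monomials (hs : nat -> pseries R) d (c : nat -> R) : nat -> pseries R :=
  fun j i => hs j i + monomial d (c j) i.

Lemma residue_step hs d : vanishes_below (residue hs) (m + d) ->
  exists c, vanishes_below (residue (add_monomials hs d c)) (m + d).+1.
Proof.
move=> low.
have [t res_t] : exists t : nat -> R, residue hs (m + d)%N = \sum_(j < p) fs j m * t j.
  by apply: (@lead_J_span (m + d)%N); exists (residue hs); split=> //; exact: residue_J.
have [c c_t] : exists c : nat -> R, forall j, iter m sigma (c j) = t j.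
  have pre j : exists x, iter m sigma x == t j.
    by have [x <-] := iter_sigma_surj m (t j); exists x.
  by exists (fun j => xchoose (pre j)) => j; apply/eqP/(xchooseP (pre j)).
exists c => i lt_i.
have -> : residue (add_monomials hs d c) i
        = residue hs i - \sum_(j < p) (fs j ** monomial d (c j)) i.
  rewrite /residue /add_monomials; under eq_bigr => j _ do rewrite skew_mulDr.
  by rewrite big_split /= opprD addrA.
move: lt_i; rewrite ltnS leq_eqVlt => /orP[/eqP-> | lt_i].
  rewrite res_t -sumrB big1 // => j _.
  by rewrite skew_mul_monomial leq_addl addnK c_t subrr.
rewrite low // big1 ?subr0 // => j _; rewrite skew_mul_monomial; case: ifP => // le_di.
by rewrite (fs_low (ltn_ord j)) ?mul0r //; lia.
Qed.

Definition next_coefs hs d : nat -> R := epsilon (inhabits (fun _ => 0))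
  (fun c => vanishes_below (residue (add_monomials hs d c)) (m + d).+1).

Fixpoint partial_quotients d : nat -> pseries R :=
  if d is d'.+1 then
    add_monomials (partial_quotients d') d' (next_coefs (partial_quotients d') d')
  else fun _ _ => 0.

Lemma residue_partial_quotients d :
  vanishes_below (residue (partial_quotients d)) (m + d).
Proof.
elim: d => [|d IH].
  move=> i; rewrite addn0 => lt_im; rewrite /residue big1 ?subr0 ?g_low // => j _.
  exact: skew_mulr0.
by rewrite addnS; exact: epsilon_spec _ _ (residue_step IH).
Qed.

Lemma partial_quotients_stable d e j :
  (d < e)%N -> partial_quotients e j d = partial_quotients d.+1 j d.
Proof.
elim: e => [|e IH] //; rewrite ltnS leq_eqVlt => /orP[/eqP-> // | lt_de].
by rewrite -IH //= /add_monomials /monomial ifN ?addr0 // neq_ltn lt_de.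
Qed.

Lemma mem_of_lead_span : I g.
Proof.
pose hs j i := partial_quotients i.+1 j i.
have -> : g = fun k => \sum_(j < p) (fs j ** hs j) k.
  apply: functional_extensionality => k.
  have /eqP := residue_partial_quotients (ltn_addl m (ltnSn k)).
  rewrite subr_eq0 => /eqP ->; apply: eq_bigr => j _; apply: eq_skew_mulr => i le_ik.
  by rewrite /hs partial_quotients_stable.
exact: right_ideal_sum_mul I_ideal fs_I.
Qed.

End Approximation.

Lemma sub_of_lead_ideals_sub I J : right_noetherian (ring_sig R) ->
  right_ideal S I -> right_ideal S J -> (forall f, I f -> J f) ->
  (forall n x, lead_ideal n J x -> lead_ideal n I x) -> forall g, J g -> I g.
Proof.
move=> noeth I_ideal J_ideal subIJ lead_sub g Jg.
have [l [l_lead l_span]] :=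
  right_noetherian_finitely_generated noeth (lead_union_right_ideal I_ideal).
have [m l_m] := lead_union_bounded I_ideal l_lead.
pose fs j := epsilon (inhabits (fun _ => 0))
  (fun f => [/\ I f, vanishes_below f m & f m = l`_j]).
have fs_spec j : (j < size l)%N -> [/\ I (fs j), vanishes_below (fs j) m & fs j m = l`_j].
  by move=> lt_j; exact: epsilon_spec _ _ (l_m j lt_j).
have [f If low] := approx_below m I_ideal J_ideal subIJ lead_sub Jg.
have Igf : I (fun i => g i - f i).
  apply: (mem_of_lead_span (p := size l) (m := m) (fs := fs) I_ideal J_ideal subIJ) => //.
  - by move=> j /fs_spec[].
  - by move=> j /fs_spec[].
  - move=> n x /lead_sub Lx; have [t ->] := l_span x (ex_intro _ n Lx).
    by exists t; apply: eq_bigr => j _; case: (fs_spec j (ltn_ord j)) => _ _ ->.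
  - exact: (right_idealD J_ideal) Jg (right_idealN J_ideal (subIJ _ If)).
have -> : g = fun i => (g i - f i) + f i.
  by apply: functional_extensionality => i; rewrite subrK.
exact: (right_idealD I_ideal) Igf If.
Qed.

End SkewPowerSeries.

Theorem theorem19 (R : pzRingType) (sigma : R -> R)
  (sigma_add : forall x y : R, sigma (x + y) = sigma x + sigma y)
  (sigma_surj : forall y : R, exists x : R, sigma x = y)
  (sigma1 : sigma 1 = 1) :
  right_noetherian (ring_sig R) ->
  right_noetherian (skew_pseries_sig sigma).
Proof.
move=> noeth I I_ideal I_incr.
have I_le f k k' : (k <= k')%N -> I k f -> I k' f.
  exact: (@ascending_le (fun k => I k f) (fun k => I_incr k f)).
have [N lead_stable] := right_noetherian_double_chain noeth
  (fun n k => lead_ideal_right_ideal sigma_add sigma_surj n (I_ideal k))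
  (fun n k x => lead_idealS sigma_add sigma1 (I_ideal k))
  (fun n k x => lead_ideal_sub (I_incr k)).
exists N => k le_Nk g; split; last exact: I_le.
apply: (sub_of_lead_ideals_sub sigma_add sigma_surj sigma1 noeth (I_ideal N) (I_ideal k)).
- by move=> f; apply: I_le.
- exact: lead_stable.
Qed.
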